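(* Let $p\ge 1$ and $q\ge 3$ be integers. If $H$ is a graph that is $Q$-cospectral with the jellyfish graph $JFG(p,q)$, then $\det(Q(H))\in\{0,4\}$.
   Context: All graphs are finite and simple. The jellyfish graph $JFG(p,q)$ is obtained from a cycle $C_q$ and $q$ copies of the star $K_{1,p}$ by identifying each vertex of $C_q$ with the center (vertex of maximum degree) of a distinct copy of $K_{1,p}$. The signless Laplacian matrix is $Q(G)=A(G)+D(G)$, with $A(G)$ the adjacency matrix and $D(G)$ the diagonal degree matrix. Two graphs are $Q$-cospectral if their signless Laplacian matrices have the same spectrum. *)

From mathcomp Require Import all_boot all_order all_algebra.
Set Implicit Arguments. Unset Strict Implicit. Unset Printing Implicit Defensive.
Import GRing.Theory Num.Theory.
Local Open Scope ring_scope.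

Definition simple_graph (n : nat) (e : rel 'I_n) : Prop :=
  symmetric e /\ irreflexive e.

Definition deg (n : nat) (e : rel 'I_n) (i : 'I_n) : nat := #|[set j | e i j]|.

Definition adjmx (n : nat) (e : rel 'I_n) : 'M[int]_n :=
  \matrix_(i, j) (e i j)%:R.
Definition degmx (n : nat) (e : rel 'I_n) : 'M[int]_n :=
  \matrix_(i, j) (if i == j then (deg e i)%:R else 0).
Definition Qmx (n : nat) (e : rel 'I_n) : 'M[int]_n := adjmx e + degmx e.

(* Q-cospectral: the signless Laplacians have the same spectrum, i.e. the same
   characteristic polynomial (as matrices of possibly different sizes; equal
   characteristic polynomials forces equal order). *)
Definition Q_cospectral (n m : nat) (e1 : rel 'I_n) (e2 : rel 'I_m) : Prop :=
  char_poly (Qmx e1) = char_poly (Qmx e2).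

(* Jellyfish graph JFG(p,q) on vertex set 'I_(q * (p+1)):
   vertex v encodes block  v %/ (p+1)  (a vertex of C_q) and position
   v %% (p+1); position 0 is the cycle vertex (centre of the star), positions
   1..p are the p pendant leaves of the star attached to it. *)
Definition jf_blk (p : nat) (v : nat) : nat := (v %/ p.+1)%N.
Definition jf_pos (p : nat) (v : nat) : nat := (v %% p.+1)%N.

Definition jf_adj (p q : nat) : rel 'I_(q * p.+1) :=
  fun u v =>
    if (jf_pos p u == 0%N) && (jf_pos p v == 0%N) then
      (jf_blk p v == (jf_blk p u).+1 %% q)%N || (jf_blk p u == (jf_blk p v).+1 %% q)%N
    else
      (jf_blk p u == jf_blk p v) && ((jf_pos p u == 0%N) != (jf_pos p v == 0%N)).
Arguments jf_adj p q : clear implicits.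

(* For a map f without fixed points or 2-cycles, the signless Laplacian of the
   graph with edges {v, f v} factors as Q = M^T M, M being its edge-vertex
   incidence matrix.  JFG(p,q) is such a graph, and f maps every vertex into
   the cycle, on which it acts as a cyclic permutation.  A permutation s
   contributes to the Leibniz expansion of det M only if s v is v or f v for
   every v; its moved vertices are then an f-stable set on which s = f, and this
   forces them to be none or the whole cycle.  So det M = 1 + sign = 0 or 2, and
   det Q = (det M)^2 is 0 or 4.  The determinant is, up to a sign fixed by the
   order, the constant coefficient of the characteristic polynomial, so every
   graph Q-cospectral with JFG(p,q) has the same one. *)

From mathcomp Require Import all_boot all_order all_fingroup all_algebra zify.
Import GRing.Theory.
Set Implicit Arguments. Unset Strict Implicit. Unset Printing Implicit Defensive.

Section FunGraph.
Local Open Scope ring_scope.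
Variables (n : nat) (f : 'I_n -> 'I_n).

Definition fun_graph : rel 'I_n := fun u w => (f u == w) || (f w == u).

Definition incident (u v : 'I_n) : bool := (u == v) || (u == f v).

(* Row v is the edge {v, f v}: the edges of a functional graph are indexed by
   their tails. *)
Definition incmx : 'M[int]_n := \matrix_(v, u) (incident u v)%:R.

Lemma incmx_gram u w :
  (incmx^T *m incmx) u w = #|[pred v | incident u v && incident w v]|%:R.
Proof.
rewrite !mxE -sum1_card natr_sum [RHS]big_mkcond /=; apply: eq_bigr => v _.
by rewrite !mxE !inE; case: (incident u v); case: (incident w v).
Qed.

Definition edge_perm (s : 'S_n) := [forall v, incident (s v) v].

Lemma det_incmx : \det incmx = \sum_(s : 'S_n | edge_perm s) (-1) ^+ s.
Proof.
rewrite [RHS]big_mkcond; apply: eq_bigr => s _ /=.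
case: ifP => [/forallP s_edge | /negbT].
  by rewrite big1 ?mulr1 // => v _; rewrite mxE s_edge.
rewrite negb_forall => /existsP[v not_edge].
by rewrite (bigD1 v) //= mxE (negbTE not_edge) mul0r mulr0.
Qed.

Hypothesis f_neq : forall v, f v != v.
Hypothesis f2_neq : forall v, f (f v) != v.

Lemma card_incident u :
  #|[pred v | incident u v && incident u v]| = deg fun_graph u.
Proof.
have -> : #|[pred v | incident u v && incident u v]|
          = #|[predU1 u & [pred v | f v == u]]|.
  by apply: eq_card => v; rewrite !inE andbb /incident eq_sym [u == f v]eq_sym.
have -> : deg fun_graph u = #|[predU1 f u & [pred v | f v == u]]|.
  by apply: eq_card => v; rewrite !inE /fun_graph eq_sym.
by rewrite !cardU1 !inE /= (negbTE (f_neq u)) (negbTE (f2_neq u)).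
Qed.

Lemma incident_both u w v : u != w ->
  incident u v && incident w v
  = ((v == u) && (f u == w)) || ((v == w) && (f w == u)).
Proof.
rewrite /incident => neq_uw.
case: (eqVneq v u) => [->|neq_vu] /=.
  by rewrite eq_sym (negbTE neq_uw) orbF eq_sym.
case: (eqVneq v w) => [->|neq_vw] /=; first by rewrite andbT eq_sym.
by apply/negbTE; apply: contra neq_uw => /andP[/eqP-> /eqP->].
Qed.

Lemma card_incident_both u w : u != w ->
  #|[pred v | incident u v && incident w v]| = fun_graph u w.
Proof.
move=> neq_uw; rewrite /fun_graph.
case: (eqVneq (f u) w) => [fu_w|fu_w]; case: (eqVneq (f w) u) => [fw_u|fw_u] /=.
- by have := f2_neq u; rewrite fu_w fw_u eqxx.
- rewrite -(card1 u); apply: eq_card => v.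
  by rewrite !inE incident_both // fu_w (negbTE fw_u) eqxx andbT andbF orbF.
- rewrite -(card1 w); apply: eq_card => v.
  by rewrite !inE incident_both // fw_u (negbTE fu_w) eqxx andbT andbF.
- apply: eq_card0 => v.
  by rewrite !inE incident_both // (negbTE fw_u) (negbTE fu_w) !andbF.
Qed.

Lemma Qmx_fun_graph : Qmx fun_graph = incmx^T *m incmx.
Proof.
apply/matrixP => u w; rewrite incmx_gram !mxE.
case: (eqVneq u w) => [<-|neq_uw]; last by rewrite addr0 card_incident_both.
by rewrite card_incident /fun_graph (negbTE (f_neq u)) add0r.
Qed.

End FunGraph.

Section CyclicImage.
Local Open Scope ring_scope.
Variables (n : nat) (f : 'I_n -> 'I_n) (C : {set 'I_n}).
Hypothesis f_in_C : forall v, f v \in C.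
Hypothesis C_orbit : {in C &, forall c c', exists k, iter k f c = c'}.

Lemma iter_in_C k c : c \in C -> iter k f c \in C.
Proof. by case: k => [|k] //= _; apply: f_in_C. Qed.

Lemma C_sub_imset : C \subset f @: C.
Proof.
apply/subsetP => c Cc; have [[|k] /= fc_c] := C_orbit (f_in_C c) Cc.
  by rewrite -fc_c imset_f.
by rewrite -fc_c imset_f // iter_in_C.
Qed.

Lemma f_inj_C : {in C &, injective f}.
Proof.
apply/imset_injP; rewrite eqn_leq leq_imset_card.
exact: subset_leq_card C_sub_imset.
Qed.

Definition cycle_fun v := if v \in C then f v else v.

Lemma cycle_fun_inj : injective cycle_fun.
Proof.
move=> u w; rewrite /cycle_fun.
case: ifP => Cu; case: ifP => Cw; [exact: f_inj_C | | |] => // fu_w.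
- by move: Cw; rewrite -fu_w f_in_C.
- by move: Cu; rewrite fu_w f_in_C.
Qed.

Definition cycle_perm : 'S_n := perm cycle_fun_inj.

Lemma cycle_permE v : cycle_perm v = if v \in C then f v else v.
Proof. by rewrite permE. Qed.

Section EdgePerm.
Variable s : 'S_n.
Hypothesis s_edge : edge_perm f s.

Lemma edge_perm_moved v : s v != v -> s v = f v.
Proof. by move/forallP: s_edge => /(_ v) /orP[/eqP-> /eqP | /eqP]. Qed.

Lemma edge_perm_moved_f v : s v != v -> s (f v) != f v.
Proof.
move=> sv_v; have sv := edge_perm_moved sv_v.
apply: contra sv_v => /eqP sfv.
have fv_v : f v = v by apply: (@perm_inj _ s); rewrite sfv sv.
by rewrite sv fv_v.
Qed.

Lemma edge_perm_moved_iter k v : s v != v -> s (iter k f v) != iter k f v.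
Proof. by elim: k => //= k IHk /IHk; apply: edge_perm_moved_f. Qed.

Lemma edge_perm_moved_in_C v : s v != v -> v \in C.
Proof.
(* The orbit of f v in C returns to f v through some w with f w = f v; as w is
   moved too and s is injective with s = f on moved vertices, w = v. *)
move=> sv_v; have sfv := edge_perm_moved_f sv_v.
have [[|k] /= w_fv] := C_orbit (f_in_C (f v)) (f_in_C v).
  by have := edge_perm_moved sfv; rewrite w_fv => /eqP; rewrite (negbTE sfv).
set w := iter k f (f (f v)) in w_fv.
have sw_w : s w != w.
  by rewrite /w -(iterSr k f (f v)); apply: edge_perm_moved_iter.
have <- : w = v.
  by apply: (@perm_inj _ s); rewrite (edge_perm_moved sw_w) (edge_perm_moved sv_v).
exact: iter_in_C.
Qed.

Lemma edge_perm_cases : s = 1%g \/ s = cycle_perm.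
Proof.
case: (pickP [pred c in C | s c != c]) => [c /andP[Cc sc_c]|fixC]; [right|left].
  apply/permP => v; rewrite cycle_permE; case: ifP => Cv.
    by have [k <-] := C_orbit Cc Cv; apply/edge_perm_moved/edge_perm_moved_iter.
  by apply/eqP; apply: contraFT Cv; apply: edge_perm_moved_in_C.
apply/permP => v; rewrite perm1; apply/eqP; apply: contraT => sv_v.
by have := fixC v; rewrite /= (edge_perm_moved_in_C sv_v) sv_v.
Qed.

End EdgePerm.

Lemma edge_permE s : edge_perm f s = (s == 1%g) || (s == cycle_perm).
Proof.
apply/idP/orP => [/edge_perm_cases [->|->]|[/eqP->|/eqP->]]; [by left|by right| |].
  by apply/forallP => v; rewrite perm1 /incident eqxx.
by apply/forallP => v; rewrite cycle_permE /incident; case: ifP; rewrite eqxx ?orbT.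
Qed.

Lemma det_incmx_cycle : cycle_perm != 1%g ->
  \det (incmx f) = 1 + (-1) ^+ cycle_perm.
Proof.
move=> cycle_perm_neq1; rewrite det_incmx (bigD1 1%g) ?edge_permE ?eqxx //=.
rewrite (bigD1 cycle_perm) ?edge_permE ?eqxx ?orbT //= big1 ?addr0 ?odd_perm1 //.
by move=> s; rewrite edge_permE => /andP[/andP[/orP[->|->]]].
Qed.

Lemma det_Qmx_fun_graph (v0 : 'I_n) :
  (forall v, f v != v) -> (forall v, f (f v) != v) ->
  \det (Qmx (fun_graph f)) = 0 \/ \det (Qmx (fun_graph f)) = 4.
Proof.
move=> f_neq f2_neq; rewrite Qmx_fun_graph // det_mulmx det_tr.
have cycle_perm_neq1 : cycle_perm != 1%g.
  apply/eqP => /permP/(_ (f v0)); rewrite cycle_permE f_in_C perm1.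
  by apply/eqP; apply: f_neq.
by rewrite det_incmx_cycle //; case: (odd_perm cycle_perm); [left|right].
Qed.

End CyclicImage.

Section Jellyfish.
Variables p q : nat.
Local Notation V := 'I_(q * p.+1).

Lemma jf_blk_lt (v : V) : jf_blk p v < q.
Proof. by rewrite ltn_divLR. Qed.

Lemma jf_pos0E (v : nat) : jf_pos p v = 0 -> v = jf_blk p v * p.+1.
Proof.
by rewrite /jf_pos /jf_blk => pos_v; rewrite [LHS](divn_eq v p.+1) pos_v addn0.
Qed.

Lemma eq_mul_blkE x v : (x * p.+1 == v) = (x == jf_blk p v) && (jf_pos p v == 0).
Proof.
apply/eqP/andP => [<-|[/eqP-> /eqP/jf_pos0E <-//]].
by rewrite /jf_blk /jf_pos mulnK // modnMl.
Qed.

Definition jf_next_blk (v : nat) : nat :=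
  if jf_pos p v == 0 then (jf_blk p v).+1 %% q else jf_blk p v.

Lemma jf_succ_subproof (v : V) : jf_next_blk v * p.+1 < q * p.+1.
Proof.
have blk_lt := jf_blk_lt v.
by rewrite ltn_pmul2r // /jf_next_blk; case: ifP => // _; rewrite ltn_pmod //; lia.
Qed.

(* A leaf is sent to the centre of its star, a centre to the next centre on the
   cycle; JFG(p,q) is the graph of this map. *)
Definition jf_succ (v : V) : V := Ordinal (jf_succ_subproof v).

Lemma jf_pos_succ (v : V) : jf_pos p (jf_succ v) = 0.
Proof. exact: modnMl. Qed.

Lemma jf_blk_succ (v : V) : jf_blk p (jf_succ v) = jf_next_blk v.
Proof. exact: mulnK. Qed.

Lemma jf_adjE : jf_adj p q =2 fun_graph jf_succ.
Proof.
move=> u w; rewrite /jf_adj /fun_graph -!val_eqE /= !eq_mul_blkE /jf_next_blk.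
case: (jf_pos p u == 0); case: (jf_pos p w == 0);
  rewrite /= ?andbT ?andbF ?orbF //= eq_sym //.
by rewrite [X in _ || X]eq_sym.
Qed.

Definition jf_centers : {set V} := [set v : V | jf_pos p v == 0].

Lemma jf_succ_center (v : V) : jf_succ v \in jf_centers.
Proof. by rewrite inE jf_pos_succ. Qed.

Lemma jf_center_inj :
  {in jf_centers &, forall c c' : V, jf_blk p c = jf_blk p c' -> c = c'}.
Proof.
move=> c c'; rewrite !inE => /eqP/jf_pos0E pos_c /eqP/jf_pos0E pos_c' eq_blk.
by apply: val_inj; rewrite /= pos_c pos_c' eq_blk.
Qed.

Lemma jf_iter_center (c : V) k :
  c \in jf_centers -> iter k jf_succ c \in jf_centers.
Proof. by case: k => [|k] //= _; apply: jf_succ_center. Qed.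

Lemma jf_blk_iter (c : V) k : c \in jf_centers ->
  jf_blk p (iter k jf_succ c) = (jf_blk p c + k) %% q.
Proof.
move=> Cc; elim: k => [|k IHk]; first by rewrite addn0 modn_small // jf_blk_lt.
have := jf_iter_center k Cc; rewrite inE /= jf_blk_succ /jf_next_blk => ->.
by rewrite IHk -addn1 modnDml addn1 addnS.
Qed.

Lemma jf_iter_center_eq (c : V) k :
  c \in jf_centers -> (iter k jf_succ c == c) = (q %| k).
Proof.
move=> Cc; apply/eqP/idP => [kc_c | dvd_qk].
  have := jf_blk_iter k Cc; rewrite kc_c.
  rewrite -{1}(modn_small (jf_blk_lt c)) -{1}[jf_blk p c]addn0.
  by move/eqP; rewrite eqn_modDl mod0n eq_sym.
apply: jf_center_inj; rewrite ?jf_iter_center // jf_blk_iter //.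
by rewrite -modnDmr (eqP dvd_qk) addn0 modn_small // jf_blk_lt.
Qed.

Lemma jf_iter_neq k (v : V) : 0 < k < q -> iter k jf_succ v != v.
Proof.
case: k => [//|k] k_lt_q; have [Cv|nCv] := boolP (v \in jf_centers).
  by rewrite jf_iter_center_eq // gtnNdvd.
by apply: contraNneq nCv => <-; apply: jf_succ_center.
Qed.

Lemma jf_centers_orbit :
  {in jf_centers &, forall c c' : V, exists k, iter k jf_succ c = c'}.
Proof.
move=> c c' Cc Cc'; exists (jf_blk p c' + q - jf_blk p c).
apply: jf_center_inj; rewrite ?jf_iter_center // jf_blk_iter //.
have blk_c := jf_blk_lt c.
have -> : jf_blk p c + (jf_blk p c' + q - jf_blk p c) = jf_blk p c' + q by lia.
by rewrite modnDr modn_small ?jf_blk_lt.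
Qed.

End Jellyfish.

Local Open Scope ring_scope.

Lemma det_eq_of_char_poly (R : comNzRingType) (n m : nat)
    (A : 'M[R]_n) (B : 'M[R]_m) :
  char_poly A = char_poly B -> \det A = \det B.
Proof.
move=> eqAB; have /eqP := size_char_poly B.
rewrite -eqAB size_char_poly eqSS => /eqP n_eq_m; subst m.
have := char_poly_det A; rewrite eqAB char_poly_det.
by move/(congr1 ( *%R ((-1) ^+ n))); rewrite !signrMK.
Qed.

Lemma eq_Qmx (n : nat) (e1 e2 : rel 'I_n) : e1 =2 e2 -> Qmx e1 = Qmx e2.
Proof.
move=> eq_e; apply/matrixP => i j; rewrite !mxE eq_e /deg.
by rewrite (eq_card (B := [set k | e2 i k])) // => k; rewrite !inE eq_e.
Qed.

Theorem lemma3p7 (p q : nat) (hp : (1 <= p)%N) (hq : (3 <= q)%N)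
  (n : nat) (e : rel 'I_n) :
  simple_graph e ->
  Q_cospectral e (jf_adj p q) ->
  \det (Qmx e) = 0 \/ \det (Qmx e) = 4.
Proof.
move=> _ cospec; rewrite (det_eq_of_char_poly cospec) (eq_Qmx (@jf_adjE p q)).
have v0 : 'I_(q * p.+1) by apply: (@Ordinal _ 0); rewrite muln_gt0; lia.
apply: (det_Qmx_fun_graph (@jf_succ_center p q) (@jf_centers_orbit p q) v0).
  by move=> v; apply: (@jf_iter_neq p q 1); lia.
by move=> v; apply: (@jf_iter_neq p q 2); lia.
Qed.
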